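(* Let $(p_n)$ be a sequence in $(0,1)$ such that $\alpha=\lim_{n\to\infty}p_n\log n$ exists with $0<\alpha<\infty$, and let $\gamma>0$. For the torn-paper channel with block length $n$ and tearing probability $p_n$, let $\mathcal Y_\gamma$ be the collection of output fragments $\vec Y_i$ whose underlying length satisfies $N_{\pi_i}\ge\gamma\log n$, and $|\mathcal Y_\gamma|$ their number. Then for any $\epsilon>0$, $$\lim_{n\to\infty}\Pr\left(\big||\mathcal Y_\gamma| - e^{-\alpha\gamma} n p_n\big|>\epsilon n p_n\right)=0.$$
   Context: Logarithms are base 2. The torn-paper channel with block length $n$ and tearing probability $p_n$: the input $X^n\in\{0,1\}^n$ is cut into consecutive fragments $\vec X_1,\dots,\vec X_K$, where $N_1,N_2,\dots$ are i.i.d. $\mathrm{Geometric}(p_n)$ (support $\{1,2,\dots\}$, mean $1/p_n$), $K$ is the smallest index with $\sum_{i=1}^K N_i\ge n$, $\vec X_i$ consists of positions $1+\sum_{j<i}N_j$ through $\sum_{j\le i}N_j$ for $i<K$, and $\vec X_K$ of positions $1+\sum_{j<K}N_j$ through $n$. Given $K$, $\pi$ is a uniformly random permutation of $\{1,\dots,K\}$ and the output is the unordered collection $\{\vec Y_1,\dots,\vec Y_K\}$ with $\vec Y_i=\vec X_{\pi_i}$. Thus $|\mathcal Y_\gamma|=\sum_{i=1}^K \mathbf 1\{N_i\ge\gamma\log n\}$. *)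

From HB Require Import structures.
From mathcomp Require Import all_boot all_order all_algebra.
From mathcomp Require Import all_classical all_reals all_analysis.
Set Implicit Arguments. Unset Strict Implicit. Unset Printing Implicit Defensive.
Import Order.TTheory GRing.Theory Num.Theory.
Local Open Scope classical_set_scope.
Local Open Scope ring_scope.

Definition log2 {R : realType} (x : R) : R := ln x / ln 2.

Definition geom_pmf {R : realType} (p : R) (k : nat) : R :=
  if k is k'.+1 then (1 - p) ^+ k' * p else 0.

(* Fragment lengths N_1..N_n are x 0, ..., x (n-1).  K = smallest index k
   (1 <= k) with N_1 + ... + N_k >= n.  Since each N_i >= 1, K <= n a.s. *)
Definition Ktear (n : nat) (x : {ffun 'I_n -> nat}) : nat :=
  (find (fun k => n <= \sum_(i < n | (i < k)%N) x i)%N (iota 1 n)).+1.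

Definition long_frag {R : realType} (gamma : R) (n k : nat) : bool :=
  gamma * log2 (n%:R : R) <= (k%:R : R).

Definition Ygamma {R : realType} (gamma : R) (n : nat) (x : {ffun 'I_n -> nat}) : nat :=
  (\sum_(i < n | (i < Ktear x)%N) nat_of_bool (long_frag gamma n (x i)))%N.

(* Joint law of the i.i.d. Geometric(p) lengths N_1..N_n (which determine
   K and |Y_gamma|): probability of an event E. *)
Definition geom_prob {R : realType} (p : R) (n : nat) (E : {ffun 'I_n -> nat} -> Prop)
  : \bar R :=
  \esum_(x in [set x | E x]) ((\prod_(i < n) geom_pmf p (x i))%:E).
Arguments geom_prob {R} p n E.

From HB Require Import structures.
From mathcomp Require Import all_boot all_order all_algebra.
From mathcomp Require Import all_classical all_reals all_analysis.
From mathcomp Require Import lra ring zify.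
Import Order.TTheory GRing.Theory Num.Theory.
Import numFieldNormedType.Exports.
Local Open Scope classical_set_scope.
Local Open Scope ring_scope.

(* Write A = n p_n, beta = e^(-alpha gamma) and j = ceil(gamma log n), so that a
   fragment is long iff its length is at least j.  For m = (1 +- delta) A,
   Chebyshev's inequality applied to the partial sums N_1 + ... + N_m (mean m / p_n,
   variance at most m / p_n^2) and to the number of long fragments among the first m
   (mean m (1 - p_n)^(j-1), variance at most m) fails with probability O(1 / A).
   Outside these four events the number K of fragments lies between (1 - delta) A
   and (1 + delta) A, so |Y_gamma| is squeezed between the two long-fragment counts;
   each is within eps A / 2 of its mean, which is within eps A / 2 of beta A because
   (1 - p_n)^(j-1) -> beta.  Finally A -> oo. *)

Section esum_scale.
Context {R : realType} {T : choiceType}.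
Local Open Scope ereal_scope.

Lemma esumZl (I : set T) (a : T -> \bar R) (c : R) :
  (0 <= c)%R -> (forall i, 0 <= a i) ->
  \esum_(i in I) (c%:E * a i) = c%:E * \esum_(i in I) a i.
Proof.
move=> c0 a0; rewrite /esum -ereal_supZl//; last first.
  by apply/set0P; exists 0; exists set0; [exact: fsets_set0|rewrite fsbig_set0].
congr ereal_sup; apply/seteqP; split=> y /=.
  case=> A FA <-; exists (\sum_(x \in A) a x); first by exists A.
  by rewrite ge0_mule_fsumr.
by case=> _ [A FA <-] <-; exists A => //; rewrite ge0_mule_fsumr.
Qed.

Lemma esumZr (I : set T) (a : T -> \bar R) (c : R) :
  (0 <= c)%R -> (forall i, 0 <= a i) ->
  \esum_(i in I) (a i * c%:E) = (\esum_(i in I) a i) * c%:E.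
Proof.
by move=> c0 a0; rewrite [RHS]muleC -esumZl//; apply: eq_esum => i _; rewrite muleC.
Qed.

End esum_scale.

Definition ffun_cons {T : Type} {n} (t : T) (y : {ffun 'I_n -> T}) : {ffun 'I_n.+1 -> T} :=
  [ffun i => if unlift ord0 i is Some j then y j else t].

Lemma ffun_cons0 {T : Type} {n} (t : T) (y : {ffun 'I_n -> T}) : ffun_cons t y ord0 = t.
Proof. by rewrite ffunE unlift_none. Qed.

Lemma ffun_consS {T : Type} {n} (t : T) (y : {ffun 'I_n -> T}) i :
  ffun_cons t y (lift ord0 i) = y i.
Proof. by rewrite ffunE liftK. Qed.

Lemma esum_ffun_prod {R : realType} {T : choiceType} {n} (F : 'I_n -> T -> R) (s : 'I_n -> R) :
  (forall i t, 0 <= F i t) ->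
  (forall i, (\esum_(t in [set: T]) (F i t)%:E)%E = (s i)%:E) ->
  (\esum_(x in [set: {ffun 'I_n -> T}]) (\prod_(i < n) F i (x i))%:E)%E
    = (\prod_(i < n) s i)%:E.
Proof.
elim: n F s => [|n IH] F s F0 Fs.
  rewrite big_ord0 (_ : [set: {ffun 'I_0 -> T}] = [set ffun0 (card_ord 0)]).
    by rewrite esum_set1 ?big_ord0.
  by apply/seteqP; split=> x _ //=; apply/ffunP => -[].
rewrite (reindex_esum [set: T * {ffun 'I_n -> T}] _ (fun ty => ffun_cons ty.1 ty.2)); last first.
  split=> // [[t y] [t' y'] _ _ /= E|x _].
    have -> : t = t' by rewrite -(ffun_cons0 t y) E ffun_cons0.
    by congr pair; apply/ffunP => i; rewrite -(ffun_consS t y) E ffun_consS.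
  exists (x ord0, [ffun j => x (lift ord0 j)]) => //=.
  by apply/ffunP => i; rewrite ffunE; case: unliftP => [j ->|->] //; rewrite ffunE.
have -> : [set: T * {ffun 'I_n -> T}] = [set: T] `*`` (fun=> [set: {ffun 'I_n -> T}]).
  by apply/seteqP; split.
rewrite -(@esum_esum _ _ _ _ _
  (fun t y => (\prod_(i < n.+1) F i (ffun_cons t y i))%:E)); last first.
  by move=> i j _ _; rewrite lee_fin; apply: prodr_ge0.
have IHs := IH _ _ (fun i => F0 (lift ord0 i)) (fun i => Fs (lift ord0 i)).
have s_ge0 i : 0 <= s i.
  by rewrite -lee_fin -Fs; apply: esum_ge0 => t _; rewrite lee_fin.
transitivity (\esum_(t in [set: T]) ((F ord0 t)%:E * (\prod_(i < n) s (lift ord0 i))%:E))%E.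
  apply: eq_esum => t _; under eq_esum do rewrite big_ord_recl ffun_cons0 EFinM.
  rewrite esumZl//; last by move=> y; rewrite lee_fin; apply: prodr_ge0.
  by rewrite -IHs; congr (_ * _)%E; apply: eq_esum => y _; under eq_bigr do rewrite ffun_consS.
rewrite esumZr ?prodr_ge0 // => [|t]; last by rewrite lee_fin.
by rewrite Fs big_ord_recl EFinM.
Qed.

Lemma nneseries_cvg_EFin {R : realType} [u : nat -> R] [l : R] :
  series u @ \oo --> l -> (\sum_(k <oo) (u k)%:E)%E = l%:E.
Proof.
move=> ul; apply: cvg_lim => //; apply: cvg_EFin; first by apply: nearW => n; rewrite sumEFin.
by apply: cvg_trans ul; apply: near_eq_cvg; apply: nearW => n /=; rewrite sumEFin.
Qed.

Section geometric_series.
Context {R : realType}.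
Variable q : R.
Hypothesis q_ge0 : 0 <= q.
Hypothesis q_lt1 : q < 1.
Local Open Scope ereal_scope.

Let cvg_geometric_q (a : R) : series (geometric a q) @ \oo --> (a / (1 - q))%R.
Proof. by apply: cvg_geometric_series; rewrite ger0_norm. Qed.

Lemma nneseries_geometric_tail i :
  \sum_(k <oo) (((i <= k)%N)%:R * q ^+ k)%:E = (q ^+ i / (1 - q))%:E.
Proof.
have ge0 k : 0 <= (((i <= k)%N)%:R * q ^+ k)%:E by rewrite lee_fin mulr_ge0 ?exprn_ge0.
rewrite (nneseries_split 0 i) // big_nat big1 => [|k /andP[_ ki]]; last first.
  by rewrite leqNgt ki mul0r.
rewrite add0e add0n -nneseries_addn // -(nneseries_cvg_EFin (cvg_geometric_q _)).
by apply: eq_eseriesr => k _; rewrite leq_addl mul1r exprD mulrC.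
Qed.

Lemma nneseries_partial_sum_geometric (a : nat -> R) : (forall i, 0 <= a i)%R ->
  \sum_(k <oo) ((\sum_(i < k.+1) a i) * q ^+ k)%:E
    = ((1 - q)^-1)%:E * \sum_(i <oo) (a i * q ^+ i)%:E.
Proof.
move=> a0; transitivity (\sum_(k <oo) \sum_(i <oo) (((i <= k)%N)%:R * (a i * q ^+ k))%:E).
  apply: eq_eseriesr => k _; rewrite (nneseries_split 0 k.+1) => [|i _]; last first.
    by rewrite lee_fin !mulr_ge0 ?exprn_ge0.
  rewrite eseries0 ?adde0 => [|i]; last by rewrite add0n => ki _; rewrite leqNgt ki mul0r.
  rewrite add0n sumEFin big_mkord mulr_suml; congr EFin.
  by apply: eq_bigr => i _; rewrite -ltnS ltn_ord mul1r.
rewrite nneseries_interchange => [|i k]; last by rewrite lee_fin !mulr_ge0 ?exprn_ge0.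
rewrite -nneseriesZl => [|i _]; last by rewrite lee_fin mulr_ge0 ?exprn_ge0.
apply: eq_eseriesr => i _.
under eq_eseriesr do rewrite mulrCA EFinM.
rewrite nneseriesZl => [|k _]; last by rewrite lee_fin mulr_ge0 ?exprn_ge0.
by rewrite nneseries_geometric_tail -!EFinM; congr EFin; ring.
Qed.

Lemma nneseries_geometric : \sum_(k <oo) (q ^+ k)%:E = ((1 - q)^-1)%:E.
Proof.
rewrite -[(_^-1)%R]div1r -(expr0 q) -nneseries_geometric_tail.
by apply: eq_eseriesr => k _; rewrite mul1r.
Qed.

Lemma nneseries_succ_geometric : \sum_(k <oo) (k.+1%:R * q ^+ k)%:E = ((1 - q) ^- 2)%:E.
Proof.
rewrite (eq_eseriesr (g := fun k => ((\sum_(i < k.+1) 1) * q ^+ k)%R%:E)) => [|k _]; last first.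
  by rewrite sumr_const card_ord.
rewrite (nneseries_partial_sum_geometric (fun=> 1%R)) //.
under eq_eseriesr do rewrite mul1r.
by rewrite nneseries_geometric -EFinM -invfM -expr2.
Qed.

Lemma nneseries_succ_sqr_geometric_le :
  \sum_(k <oo) (k.+1%:R ^+ 2 * q ^+ k)%:E <= (2 / (1 - q) ^+ 3)%:E.
Proof.
have odd_sum k : (\sum_(i < k.+1) 2 * i.+1%:R = (k.+1 * k.+2)%:R :> R)%R.
  elim: k => [|k IH]; first by rewrite big_ord1 mulr1.
  by rewrite big_ord_recr /= IH !natrM -!natr1; ring.
apply: (@le_trans _ _ (\sum_(k <oo) ((\sum_(i < k.+1) 2 * i.+1%:R) * q ^+ k)%R%:E)).
  apply: lee_nneseries => k _; first by rewrite lee_fin mulr_ge0 ?exprn_ge0.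
  by rewrite lee_fin ler_wpM2r ?exprn_ge0 // odd_sum -natrX ler_nat; nia.
rewrite (nneseries_partial_sum_geometric (fun i => 2 * i.+1%:R)%R) => [|i]; last first.
  by rewrite mulr_ge0.
under eq_eseriesr do rewrite -mulrA EFinM.
rewrite nneseriesZl => [|k _]; last by rewrite lee_fin mulr_ge0 ?exprn_ge0.
rewrite nneseries_succ_geometric -!EFinM lee_fin [leLHS](_ : _ = 2 / (1 - q) ^+ 3)%R //.
by field; rewrite subr_eq0 gt_eqF.
Qed.

End geometric_series.

Section geometric_law.
Context {R : realType} {p : R}.
Hypothesis hp : 0 < p < 1.
Local Open Scope ereal_scope.

Let p_gt0 : (0 < p)%R. Proof. by case/andP: hp. Qed.
Let p_neq0 : (p != 0)%R. Proof. exact: lt0r_neq0. Qed.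
Let q_ge0 : (0 <= 1 - p)%R. Proof. by case/andP: hp => _ ?; lra. Qed.
Let q_lt1 : (1 - p < 1)%R. Proof. by have := p_gt0; lra. Qed.
Let one_minus_q : (1 - (1 - p) = p)%R. Proof. by ring. Qed.

Lemma geom_pmf_ge0 k : (0 <= geom_pmf p k)%R.
Proof. by case: k => [|k] //=; rewrite mulr_ge0 ?exprn_ge0 // ltW. Qed.

Lemma esum_geom_pmf (f : nat -> R) : (forall k, 0 <= f k)%R ->
  \esum_(k in [set: nat]) (f k * geom_pmf p k)%:E
    = p%:E * \sum_(k <oo) (f k.+1 * (1 - p) ^+ k)%:E.
Proof.
move=> f0; have ge0 k : 0 <= (f k * geom_pmf p k)%:E by rewrite lee_fin mulr_ge0 // geom_pmf_ge0.
rewrite -nneseries_esumT // (nneseries_split 0 1) // big_nat1 /= mulr0 add0e add0n.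
rewrite -nneseries_addn // -nneseriesZl => [|k _]; last by rewrite lee_fin mulr_ge0 ?exprn_ge0.
by apply: eq_eseriesr => k _; rewrite addn1 -EFinM /=; congr EFin; ring.
Qed.

Lemma geom_pmf_mass : \esum_(k in [set: nat]) (geom_pmf p k)%:E = 1.
Proof.
under eq_esum do rewrite -[geom_pmf p _]mul1r.
rewrite esum_geom_pmf //; under eq_eseriesr do rewrite mul1r.
by rewrite nneseries_geometric // -EFinM one_minus_q divff.
Qed.

Lemma geom_mean : \esum_(k in [set: nat]) (k%:R * geom_pmf p k)%:E = (p^-1)%:E.
Proof.
rewrite esum_geom_pmf // nneseries_succ_geometric // -EFinM one_minus_q.
by congr EFin; field.
Qed.

Lemma geom_second_moment_le :
  \esum_(k in [set: nat]) (k%:R ^+ 2 * geom_pmf p k)%:E <= (2 / p ^+ 2)%:E.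
Proof.
rewrite esum_geom_pmf //.
apply: le_trans (lee_wpmul2l _ (nneseries_succ_sqr_geometric_le _ q_ge0 q_lt1)) _.
  by rewrite lee_fin ltW.
by rewrite -EFinM one_minus_q lee_fin [leLHS](_ : _ = 2 / p ^+ 2)%R //; field.
Qed.

Lemma geom_tail_prob j :
  \esum_(k in [set: nat]) (((j <= k)%N)%:R * geom_pmf p k)%:E = ((1 - p) ^+ j.-1)%:E.
Proof.
case: j => [|j].
  by under eq_esum do rewrite mul1r; rewrite geom_pmf_mass.
rewrite esum_geom_pmf //=; under eq_eseriesr do rewrite ltnS.
rewrite nneseries_geometric_tail // -EFinM one_minus_q.
by rewrite mulrCA divff ?mulr1.
Qed.

End geometric_law.

(* Only meaningful for nonnegative [f]: [\esum] is a supremum of finite sums. *)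
Definition geom_expect {R : realType} (p : R) {n} (f : {ffun 'I_n -> nat} -> R) : \bar R :=
  \esum_(x in [set: {ffun 'I_n -> nat}]) (f x * \prod_(i < n) geom_pmf p (x i))%:E.

Section geometric_expectation.
Context {R : realType} {p : R}.
Hypothesis hp : 0 < p < 1.
Context {n : nat}.
Implicit Types (x : {ffun 'I_n -> nat}) (f g : {ffun 'I_n -> nat} -> R).
Local Open Scope ereal_scope.

Let weight_ge0 x : (0 <= \prod_(i < n) geom_pmf p (x i))%R.
Proof. by apply: prodr_ge0 => i _; exact: geom_pmf_ge0. Qed.

Lemma geom_expect_ge0 f : (forall x, 0 <= f x)%R -> 0 <= geom_expect p f.
Proof. by move=> f0; apply: esum_ge0 => x _; rewrite lee_fin mulr_ge0. Qed.

Lemma le_geom_expect f g : (forall x, f x <= g x)%R -> geom_expect p f <= geom_expect p g.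
Proof. by move=> fg; apply: le_esum => x _; rewrite lee_fin ler_wpM2r. Qed.

Lemma geom_expectD f g : (forall x, 0 <= f x)%R -> (forall x, 0 <= g x)%R ->
  geom_expect p (fun x => f x + g x)%R = geom_expect p f + geom_expect p g.
Proof.
move=> f0 g0; rewrite /geom_expect -esumD => [|x _|x _]; last 2 first.
- by rewrite lee_fin mulr_ge0.
- by rewrite lee_fin mulr_ge0.
by apply: eq_esum => x _; rewrite mulrDl EFinD.
Qed.

Lemma geom_expectZ (c : R) f : (0 <= c)%R -> (forall x, 0 <= f x)%R ->
  geom_expect p (fun x => c * f x)%R = c%:E * geom_expect p f.
Proof.
move=> c0 f0; rewrite /geom_expect -esumZl // => [|x]; last by rewrite lee_fin mulr_ge0.
by apply: eq_esum => x _; rewrite -EFinM mulrA.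
Qed.

Lemma geom_expect_sum (I : seq 'I_n) (P : pred 'I_n) (F : 'I_n -> {ffun 'I_n -> nat} -> R) :
  (forall i x, 0 <= F i x)%R ->
  geom_expect p (fun x => \sum_(i <- I | P i) F i x)%R = \sum_(i <- I | P i) geom_expect p (F i).
Proof.
move=> F0; rewrite /geom_expect -esum_sum => [|x i _ _]; last by rewrite lee_fin mulr_ge0.
by apply: eq_esum => x _; rewrite mulr_suml sumEFin.
Qed.

Lemma geom_expect_prod (F : 'I_n -> nat -> R) (s : 'I_n -> R) :
  (forall i k, 0 <= F i k)%R ->
  (forall i, \esum_(k in [set: nat]) (F i k * geom_pmf p k)%:E = (s i)%:E) ->
  geom_expect p (fun x => \prod_(i < n) F i (x i))%R = (\prod_(i < n) s i)%:E.
Proof.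
move=> F0 Fs; rewrite /geom_expect; under eq_esum do rewrite -big_split.
apply: (esum_ffun_prod (fun i k => F i k * geom_pmf p k)%R) => // i k.
by rewrite mulr_ge0 // geom_pmf_ge0.
Qed.

Lemma geom_expect1 : @geom_expect _ p n (fun=> 1%R) = 1.
Proof.
transitivity (geom_expect p (fun x : {ffun 'I_n -> nat} => \prod_(i < n) 1)%R).
  by rewrite /geom_expect; under [RHS]eq_esum do rewrite big1_eq.
rewrite (geom_expect_prod (fun _ _ => 1%R) (fun _ => 1%R)) ?big1_eq // => i.
by under eq_esum do rewrite mul1r; rewrite geom_pmf_mass.
Qed.

Lemma geom_expect_cst (c : R) : (0 <= c)%R -> @geom_expect _ p n (fun=> c) = c%:E.
Proof.
move=> c0; rewrite -[RHS]mule1 -geom_expect1 /geom_expect -esumZl //; last first.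
  by move=> x; rewrite lee_fin mul1r.
by apply: eq_esum => x _; rewrite mul1r EFinM.
Qed.

Lemma geom_expect_coord i (h : nat -> R) (a : R) : (forall k, 0 <= h k)%R ->
  \esum_(k in [set: nat]) (h k * geom_pmf p k)%:E = a%:E ->
  geom_expect p (fun x => h (x i)) = a%:E.
Proof.
move=> h0 ha; pose F l := if l == i then h else fun=> 1%R.
have F_prod x : (\prod_(l < n) F l (x l) = h (x i))%R.
  by rewrite (bigD1 i) //= /F eqxx big1 ?mulr1 // => l /negPf ->.
have a_prod : (\prod_(l < n) (if l == i then a else 1) = a)%R.
  by rewrite (bigD1 i) //= eqxx big1 ?mulr1 // => l /negPf ->.
rewrite -a_prod -(geom_expect_prod F) => [|l k|l]; rewrite /F.
- by rewrite /geom_expect; under [RHS]eq_esum do rewrite F_prod.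
- by case: ifP.
- by case: ifP => _ //; under eq_esum do rewrite mul1r; rewrite geom_pmf_mass.
Qed.

Lemma geom_expect_coord2 i j (h g : nat -> R) (a b : R) : i != j ->
  (forall k, 0 <= h k)%R -> (forall k, 0 <= g k)%R ->
  \esum_(k in [set: nat]) (h k * geom_pmf p k)%:E = a%:E ->
  \esum_(k in [set: nat]) (g k * geom_pmf p k)%:E = b%:E ->
  geom_expect p (fun x => h (x i) * g (x j))%R = (a * b)%:E.
Proof.
move=> ij h0 g0 ha gb.
pose F l := if l == i then h else if l == j then g else fun=> 1%R.
have prod2 (c d : R) (e : 'I_n -> R) : e i = c -> e j = d ->
    (forall l, l != i -> l != j -> e l = 1)%R -> (\prod_(l < n) e l = c * d)%R.
  move=> ei ej e1; rewrite (bigD1 i) //= (bigD1 j) 1?eq_sym //= mulrA ei ej.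
  by rewrite big1 ?mulr1 // => l /andP[li lj]; exact: e1.
rewrite -(prod2 a b (fun l => if l == i then a else if l == j then b else 1%R)); first last.
- by move=> l /negPf -> /negPf ->.
- by rewrite eq_sym (negPf ij) eqxx.
- by rewrite eqxx.
rewrite -(geom_expect_prod F) => [|l k|l]; rewrite /F.
- congr (geom_expect _ _); apply/funext => x; apply/esym/prod2.
  + by rewrite eqxx.
  + by rewrite eq_sym (negPf ij) eqxx.
  + by move=> l /negPf -> /negPf ->.
- by case: ifP => _ //; case: ifP.
- by case: ifP => _ //; case: ifP => _ //; under eq_esum do rewrite mul1r; rewrite geom_pmf_mass.
Qed.

Lemma geom_probE (E : {ffun 'I_n -> nat} -> Prop) :
  geom_prob p n E = geom_expect p (fun x => (`[< E x >])%:R).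
Proof.
rewrite /geom_prob esum_mkcond; apply: eq_esum => x _.
case: asboolP => Ex; first by rewrite mul1r mem_set.
by rewrite mul0r memNset.
Qed.

Lemma geom_prob_ge0 (E : {ffun 'I_n -> nat} -> Prop) : 0 <= geom_prob p n E.
Proof. by rewrite geom_probE geom_expect_ge0. Qed.

Lemma le_geom_prob (E1 E2 : {ffun 'I_n -> nat} -> Prop) :
  (forall x, E1 x -> E2 x) -> geom_prob p n E1 <= geom_prob p n E2.
Proof.
move=> E12; rewrite !geom_probE; apply: le_geom_expect => x.
by case: (asboolP (E1 x)) => [/E12/asboolT ->|].
Qed.

Lemma geom_prob_or (E1 E2 : {ffun 'I_n -> nat} -> Prop) :
  geom_prob p n (fun x => E1 x \/ E2 x) <= geom_prob p n E1 + geom_prob p n E2.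
Proof.
rewrite !geom_probE -geom_expectD //; apply: le_geom_expect => x.
by rewrite -natrD ler_nat; case: (asboolP (E1 x)) => h1; case: (asboolP (E2 x)) => h2 //;
  case: asboolP => // -[/h1|/h2].
Qed.

Lemma geom_prob_or4 {E E1 E2 E3 E4 : {ffun 'I_n -> nat} -> Prop} :
  (forall x, E x -> [\/ E1 x, E2 x, E3 x | E4 x]) ->
  geom_prob p n E
    <= geom_prob p n E1 + geom_prob p n E2 + geom_prob p n E3 + geom_prob p n E4.
Proof.
move=> E_or; rewrite -addeA.
have E_sub x : E x -> (E1 x \/ E2 x) \/ (E3 x \/ E4 x) by case/E_or; tauto.
apply: le_trans (le_geom_prob _ _ E_sub) _.
by apply: le_trans (geom_prob_or _ _) _; apply: leeD; exact: geom_prob_or.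
Qed.

End geometric_expectation.

Lemma sumr_ord_lt_const {V : nmodType} n m (c : V) : (m <= n)%N ->
  \sum_(i < n | (i < m)%N) c = c *+ m.
Proof.
by move=> mn; rewrite (big_ord_narrow_cond (P := xpredT) mn) sumr_const card_ord.
Qed.

Lemma geom_chebyshev {R : realType} {p : R} (hp : 0 < p < 1) {n : nat}
    (S : {ffun 'I_n -> nat} -> R) (mu v t : R) :
  (forall x, 0 <= S x) -> 0 < t ->
  geom_expect p S = mu%:E -> geom_expect p (fun x => S x ^+ 2) = (mu ^+ 2 + v)%:E ->
  (geom_prob p n (fun x => t <= `|S x - mu|)%R <= (v / t ^+ 2)%:E)%E.
Proof.
move=> S0 t0 ES ES2; rewrite geom_probE.
set I := fun x => (`[< t <= `|S x - mu| >])%:R : R.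
have I0 x : 0 <= I x by [].
have mu0 : 0 <= mu by rewrite -lee_fin -ES geom_expect_ge0.
have /fineK EI : geom_expect p I \is a fin_num.
  rewrite ge0_fin_numE ?geom_expect_ge0 // (@le_lt_trans _ _ 1%E) ?ltry //.
  by rewrite -(@geom_expect1 _ _ hp n); apply: le_geom_expect => // x; rewrite /I; case: asboolP.
set PI := fine (geom_expect p I).
have lhsE : geom_expect p (fun x => t ^+ 2 * I x + 2 * mu * S x)%R
    = (t ^+ 2 * PI + 2 * mu * mu)%:E.
  rewrite (geom_expectD hp) => [|x|x]; last 2 first.
  - by rewrite mulr_ge0 ?sqr_ge0.
  - by rewrite !mulr_ge0.
  by rewrite !(geom_expectZ hp) ?sqr_ge0 ?mulr_ge0 // ES -EI -!EFinM -EFinD.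
have rhsE : geom_expect p (fun x => S x ^+ 2 + mu ^+ 2)%R = (mu ^+ 2 + v + mu ^+ 2)%:E.
  rewrite (geom_expectD hp) => [|x|x]; try exact: sqr_ge0.
  by rewrite (geom_expect_cst hp) ?sqr_ge0 // ES2 -EFinD.
(* [t^2 1{t <= |S - mu|} <= (S - mu)^2], expanded so that all terms are nonnegative. *)
have : (geom_expect p (fun x => t ^+ 2 * I x + 2 * mu * S x)%R
        <= geom_expect p (fun x => S x ^+ 2 + mu ^+ 2)%R)%E.
  apply: le_geom_expect => // x; rewrite /I; case: asboolP => [dev|_] /=; last first.
    by have := sqr_ge0 (S x - mu); rewrite mulr0n mulr0 add0r; nra.
  have := ler_pM (ltW t0) (ltW t0) dev dev; rewrite -!expr2 real_normK ?num_real //.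
  by rewrite mulr1n mulr1; nra.
rewrite lhsE rhsE lee_fin -EI lee_fin => second_moment.
by rewrite -/PI ler_pdivlMr ?exprn_gt0 //; nra.
Qed.

Section chebyshev.
Context {R : realType} {p : R}.
Hypothesis hp : 0 < p < 1.
Context {n m : nat}.
Hypothesis mn : (m <= n)%N.
Variable h : nat -> R.
Hypothesis h_ge0 : forall k, 0 <= h k.
Context {a : R}.
Hypothesis h_mean : (\esum_(k in [set: nat]) (h k * geom_pmf p k)%:E)%E = a%:E.
Local Open Scope ereal_scope.

Let partial_sum (x : {ffun 'I_n -> nat}) := (\sum_(i < n | (i < m)%N) h (x i))%R.

Lemma geom_expect_partial_sum : geom_expect p partial_sum = (m%:R * a)%:E.
Proof.
rewrite (geom_expect_sum hp) // (eq_bigr (fun=> a%:E)) => [|i _]; last exact: geom_expect_coord.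
by rewrite sumEFin sumr_ord_lt_const // mulr_natl.
Qed.

Lemma geom_expect_partial_sum_sqr (b : R) :
  \esum_(k in [set: nat]) (h k ^+ 2 * geom_pmf p k)%:E = b%:E ->
  geom_expect p (fun x => partial_sum x ^+ 2)%R
    = ((m%:R * a) ^+ 2 + m%:R * (b - a ^+ 2))%:E.
Proof.
move=> h2_mean.
have -> : (fun x => partial_sum x ^+ 2)%R = (fun x => \sum_(i < n | (i < m)%N)
    \sum_(j < n | (j < m)%N) h (x i) * h (x j))%R.
  apply/funext => x; rewrite expr2 mulr_suml.
  by apply: eq_bigr => i _; rewrite mulr_sumr.
have pair_mean (i j : 'I_n) : geom_expect p (fun x => h (x i) * h (x j))%R
    = (a ^+ 2 + (j == i)%:R * (b - a ^+ 2))%:E.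
  have [->|ij] := eqVneq i j; last first.
    by rewrite (geom_expect_coord2 hp _ _ _ _ a a ij) // mul0r addr0 expr2.
  rewrite mul1r addrC subrK -(geom_expect_coord hp j (fun k => h k ^+ 2)%R) // => k.
  exact: exprn_ge0.
rewrite (geom_expect_sum hp) => [|i x]; last first.
  by apply: sumr_ge0 => j _; rewrite mulr_ge0.
rewrite (eq_bigr (fun=> (m%:R * a ^+ 2 + (b - a ^+ 2))%:E)) => [|i im]; last first.
  rewrite (geom_expect_sum hp) => [|j x]; last by rewrite mulr_ge0.
  rewrite (eq_bigr _ (fun j _ => pair_mean i j)) sumEFin big_split /=.
  rewrite sumr_ord_lt_const // mulr_natl (bigD1 i) //= eqxx mul1r.
  by rewrite big1 ?addr0 // => j /andP[_ /negPf ->]; rewrite mul0r.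
by rewrite sumEFin sumr_ord_lt_const // -mulr_natl; congr EFin; ring.
Qed.

Lemma geom_prob_partial_sum_dev (b t : R) : (0 < t)%R ->
  \esum_(k in [set: nat]) (h k ^+ 2 * geom_pmf p k)%:E <= b%:E ->
  geom_prob p n (fun x => t <= `|partial_sum x - m%:R * a|)%R
    <= (m%:R * (b - a ^+ 2) / t ^+ 2)%:E.
Proof.
move=> t0 h2_le.
have /fineK h2_mean : \esum_(k in [set: nat]) (h k ^+ 2 * geom_pmf p k)%:E \is a fin_num.
  rewrite ge0_fin_numE ?(le_lt_trans h2_le) ?ltry // esum_ge0 // => k _.
  by rewrite lee_fin mulr_ge0 ?sqr_ge0 ?geom_pmf_ge0.
have S0 x : (0 <= partial_sum x)%R by apply: sumr_ge0.
apply: le_trans (geom_chebyshev hp _ _ _ _ S0 t0 geom_expect_partial_sum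
  (geom_expect_partial_sum_sqr _ (esym h2_mean))) _.
rewrite lee_fin ler_pM2r ?invr_gt0 ?exprn_gt0 // ler_wpM2l // lerD2r.
by rewrite -lee_fin h2_mean.
Qed.

End chebyshev.

Section deviation_instances.
Context {R : realType} {p : R}.
Hypothesis hp : 0 < p < 1.
Context {n m : nat}.
Hypothesis mn : (m <= n)%N.
Context {t : R}.
Hypothesis t_gt0 : 0 < t.
Local Open Scope ereal_scope.

Let p_neq0 : (p != 0)%R. Proof. by case/andP: hp => /lt0r_neq0. Qed.

Lemma geom_prob_lengths_dev :
  geom_prob p n (fun x => t <= `|\sum_(i < n | (i < m)%N) (x i)%:R - m%:R * p^-1|)%R
    <= (m%:R / (p ^+ 2 * t ^+ 2))%:E.
Proof.
apply: le_trans (geom_prob_partial_sum_dev hp mn (fun k => k%:R) (fun k => ler0n _ k)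
  (geom_mean hp) _ _ t_gt0 (geom_second_moment_le hp)) _.
by rewrite lee_fin [leLHS](_ : _ = m%:R / (p ^+ 2 * t ^+ 2))%R //; field; rewrite p_neq0 gt_eqF.
Qed.

Lemma geom_prob_long_count_dev j :
  geom_prob p n
    (fun x => t <= `|\sum_(i < n | (i < m)%N) ((j <= x i)%N)%:R - m%:R * (1 - p) ^+ j.-1|)%R
    <= (m%:R / t ^+ 2)%:E.
Proof.
have sqr_mean : \esum_(k in [set: nat]) (((j <= k)%N)%:R ^+ 2 * geom_pmf p k)%:E
    <= ((1 - p) ^+ j.-1)%:E.
  rewrite -(geom_tail_prob hp j); apply: le_esum => k _.
  by case: (j <= k)%N; rewrite ?expr1n ?expr0n.
apply: (le_trans (geom_prob_partial_sum_dev hp mn _ (fun k => ler0n _ _)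
  (geom_tail_prob hp j) _ _ t_gt0 sqr_mean)).
have /andP[q0 q1] : (0 <= (1 - p) ^+ j.-1 <= 1)%R.
  by case/andP: hp => p0 p1; rewrite exprn_ge0 ?exprn_ile1 //; lra.
by rewrite lee_fin ler_pM2r ?invr_gt0 ?exprn_gt0 // ler_piMr //; nra.
Qed.

End deviation_instances.

Lemma leq_partial_sum n (F : 'I_n -> nat) k1 k2 : (k1 <= k2)%N ->
  (\sum_(i < n | (i < k1)%N) F i <= \sum_(i < n | (i < k2)%N) F i)%N.
Proof.
move=> k12; rewrite [X in (X <= _)%N]big_mkcond [X in (_ <= X)%N]big_mkcond /=.
by apply: leq_sum => i _; case: ifP => // ik1; rewrite (leq_trans ik1).
Qed.

Lemma partial_sum_lt_of_lt_Ktear {n} {x : {ffun 'I_n -> nat}} {m} :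
  (0 < m)%N -> (m <= n)%N -> (m < Ktear x)%N -> (\sum_(i < n | (i < m)%N) x i < n)%N.
Proof.
move=> m0 mn; rewrite /Ktear ltnS -[X in (X <= _)%N](prednK m0) => /(before_find 0%N).
rewrite nth_iota; last by lia.
by rewrite add1n prednK // ltnNge => ->.
Qed.

Lemma partial_sum_ge_of_Ktear_lt {n} {x : {ffun 'I_n -> nat}} {m} :
  (m <= n)%N -> (Ktear x < m)%N -> (n <= \sum_(i < n | (i < m)%N) x i)%N.
Proof.
rewrite /Ktear => mn Km.
set P := (fun k => n <= \sum_(i < n | (i < k)%N) x i)%N in Km *.
have found : has P (iota 1 n) by rewrite has_find size_iota; lia.
have := nth_find 0%N found; rewrite nth_iota; last by move: found; rewrite has_find size_iota.
by rewrite add1n => /leq_trans; apply; apply: leq_partial_sum; lia.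
Qed.

Lemma upper_window_mean_le {R : realType} {A r m1 beta eps delta : R} :
  0 <= r -> r <= (1 + delta) * beta -> 0 <= m1 -> m1 <= (1 + delta) * A + 1 ->
  0 < beta <= 1 -> 0 < delta -> delta <= eps / 12 -> delta <= 1 / 2 ->
  8 <= eps * A -> 2 <= A -> m1 * r <= beta * A + eps * A / 2.
Proof.
move=> r0 r_le m0 m_le /andP[b0 b1] d0 de d12 eA A2.
have := ler_pM m0 r0 m_le r_le; move/le_trans; apply.
have Ad : 0 <= A * delta by rewrite mulr_ge0 //; lra.
have bAd : 0 <= beta * A * delta by rewrite !mulr_ge0 //; lra.
have : beta * A * delta * delta <= beta * A * delta / 2 by nra.
have : beta * A * delta <= A * delta by nra.
nra.
Qed.

Lemma lower_window_mean_ge {R : realType} {A r m2 beta eps delta : R} :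
  (1 - delta) * beta <= r -> (1 - delta) * A - 1 <= m2 ->
  0 < beta <= 1 -> 0 < delta -> delta <= eps / 12 -> delta <= 1 / 2 ->
  8 <= eps * A -> 2 <= A -> beta * A - eps * A / 2 <= m2 * r.
Proof.
move=> r_ge m_ge /andP[b0 b1] d0 de d12 eA A2.
have : ((1 - delta) * A - 1) * ((1 - delta) * beta) <= m2 * r.
  by apply: ler_pM => //; nra.
apply: le_trans.
have Ad : 0 <= A * delta by rewrite mulr_ge0 //; lra.
have : beta * A * delta <= A * delta by nra.
have : 0 <= beta * A * delta * delta by rewrite !mulr_ge0 //; lra.
nra.
Qed.

Section fragment_count.
Context {R : realType} {gamma : R} {n : nat} (x : {ffun 'I_n -> nat}) {j : nat}.
Hypothesis long_fragE : forall k, long_frag gamma n k = (j <= k)%N.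

Let long_count m := \sum_(i < n | (i < m)%N) ((j <= x i)%N)%:R : R.
Let length_sum m := \sum_(i < n | (i < m)%N) (x i)%:R : R.

Lemma Ygamma_le_long_count m : (Ktear x <= m)%N -> (Ygamma gamma x)%:R <= long_count m.
Proof.
move=> Km; rewrite /long_count -natr_sum ler_nat.
by under eq_bigr do rewrite -long_fragE; exact: leq_partial_sum.
Qed.

Lemma long_count_le_Ygamma m : (m <= Ktear x)%N -> long_count m <= (Ygamma gamma x)%:R.
Proof.
move=> Km; rewrite /long_count -natr_sum ler_nat.
by under eq_bigr do rewrite -long_fragE; exact: leq_partial_sum.
Qed.

Lemma Ygamma_dev_cases {p A r beta eps delta : R} {m1 m2 : nat} :
  (0 < m1)%N -> (m1 <= n)%N -> (m2 <= n)%N ->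
  (1 + delta) * n%:R <= m1%:R / p -> m2%:R / p <= (1 - delta) * n%:R ->
  m1%:R * r <= beta * A + eps * A / 2 -> beta * A - eps * A / 2 <= m2%:R * r ->
  eps * A < `|(Ygamma gamma x)%:R - beta * A| ->
  [\/ delta * n%:R <= `|length_sum m1 - m1%:R / p|,
      delta * n%:R <= `|length_sum m2 - m2%:R / p|,
      eps * A / 2 <= `|long_count m1 - m1%:R * r| |
      eps * A / 2 <= `|long_count m2 - m2%:R * r| ].
Proof.
move=> m1_gt0 m1n m2n m1p m2p m1r m2r; rewrite /length_sum ltr_normr => /orP[Y_hi|Y_lo].
- have [K_gt|K_le] := ltnP m1 (Ktear x).
    apply: Or41; have := partial_sum_lt_of_lt_Ktear m1_gt0 m1n K_gt.
    by rewrite -(ltr_nat R) natr_sum ler_normr => ?; apply/orP; right; lra.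
  apply: Or43; have := Ygamma_le_long_count m1 K_le.
  by rewrite ler_normr => ?; apply/orP; left; lra.
- have [K_lt|K_ge] := ltnP (Ktear x) m2.
    apply: Or42; have := partial_sum_ge_of_Ktear_lt m2n K_lt.
    by rewrite -(ler_nat R) natr_sum ler_normr => ?; apply/orP; left; lra.
  apply: Or44; have := long_count_le_Ygamma m2 K_ge.
  by rewrite ler_normr => ?; apply/orP; right; lra.
Qed.

End fragment_count.

Lemma window_sizes {R : realType} {A delta : R} : 0 <= A -> 0 < delta <= 1 ->
  exists m1 m2 : nat, [/\ (1 + delta) * A < m1%:R, m1%:R <= (1 + delta) * A + 1,
    (1 - delta) * A - 1 <= m2%:R & m2%:R <= (1 - delta) * A].
Proof.
move=> A0 /andP[d0 d1].
have /andP[lo1 hi1] := truncn_itv (mulr_ge0 (ler_wpDr (ltW d0) ler01) A0 : 0 <= (1 + delta) * A).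
have /andP[lo2 hi2] : ((Num.trunc ((1 - delta) * A))%:R <= (1 - delta) * A
    < (Num.trunc ((1 - delta) * A)).+1%:R).
  by apply: truncn_itv; rewrite mulr_ge0 // subr_ge0.
exists (Num.trunc ((1 + delta) * A)).+1, (Num.trunc ((1 - delta) * A)).
by split=> //; move: lo1 hi2; rewrite -!natr1; lra.
Qed.

Lemma chebyshev_terms_le {R : realType} {p N A delta eps m1 m2 : R} :
  0 < p -> 0 < A -> 0 < delta -> 0 < eps -> N = A / p -> m1 + m2 <= 4 * A ->
  m1 / (p ^+ 2 * (delta * N) ^+ 2) + m2 / (p ^+ 2 * (delta * N) ^+ 2)
    + m1 / (eps * A / 2) ^+ 2 + m2 / (eps * A / 2) ^+ 2
    <= (4 / delta ^+ 2 + 16 / eps ^+ 2) / A.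
Proof.
move=> p0 A0 d0 e0 -> m12.
set u := 1 / (delta ^+ 2 * A ^+ 2); set v := 4 / (eps ^+ 2 * A ^+ 2).
have -> : (4 / delta ^+ 2 + 16 / eps ^+ 2) / A = 4 * A * u + 4 * A * v.
  by rewrite /u /v; field; rewrite !lt0r_neq0.
have lengths_term m : m / (p ^+ 2 * (delta * (A / p)) ^+ 2) = m * u.
  by rewrite /u; field; rewrite !lt0r_neq0.
have long_term m : m / (eps * A / 2) ^+ 2 = m * v.
  by rewrite /v; field; rewrite !lt0r_neq0.
rewrite !lengths_term !long_term.
have u0 : 0 <= u := divr_ge0 ler01 (mulr_ge0 (sqr_ge0 _) (sqr_ge0 _)).
have v0 : 0 <= v := divr_ge0 (ler0n _ 4) (mulr_ge0 (sqr_ge0 _) (sqr_ge0 _)).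
nra.
Qed.

Lemma Ygamma_dev_prob_le {R : realType} {p gamma eps beta delta : R} {n j : nat} :
  0 < p < 1 -> 0 < eps -> 0 < beta <= 1 -> 0 < delta -> delta <= eps / 12 -> delta <= 1 / 2 ->
  (forall k, long_frag gamma n k = (j <= k)%N) ->
  2 <= n%:R * p -> 8 / eps <= n%:R * p -> p <= 1 / 3 ->
  `|(1 - p) ^+ j.-1 - beta| <= delta * beta ->
  (geom_prob p n (fun x => eps * n%:R * p < `|(Ygamma gamma x)%:R - beta * n%:R * p|)%R
    <= ((4 / delta ^+ 2 + 16 / eps ^+ 2) / (n%:R * p))%:E)%E.
Proof.
move=> hp e0 b01 d0 de d12 long_fragE A2 A8 p3 r_beta.
have [p0 p1] : 0 < p /\ p < 1 by apply/andP.
set A := n%:R * p in A2 A8 *; set r := (1 - p) ^+ j.-1 in r_beta.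
have eA : 8 <= eps * A by rewrite -(divfK (lt0r_neq0 e0) 8) mulrC ler_wpM2l // ltW.
have nA : n%:R = A / p by rewrite /A mulfK ?lt0r_neq0.
have r0 : 0 <= r by rewrite exprn_ge0 //; lra.
move: r_beta; rewrite ler_norml => /andP[r_lo r_hi].
have A0 : 0 <= A by lra.
have d01 : 0 < delta <= 1 by apply/andP; split; lra.
have [m1 [m2 [m1_lo m1_hi m2_lo m2_hi]]] := window_sizes A0 d01.
have A3 : 3 * A <= n%:R by have n0 : 0 <= n%:R :> R by []; rewrite /A; nra.
have dA : 0 <= delta * A <= A / 2 by apply/andP; split; nra.
have m1n : (m1 <= n)%N by rewrite -(ler_nat R); lra.
have m2n : (m2 <= n)%N by rewrite -(ler_nat R); lra.
have m1_gt0 : (0 < m1)%N by rewrite -(ltr_nat R); lra.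
have m1p : (1 + delta) * n%:R <= m1%:R / p.
  by rewrite nA mulrA ler_pM2r ?invr_gt0 ?ltW.
have m2p : m2%:R / p <= (1 - delta) * n%:R by rewrite nA mulrA ler_pM2r ?invr_gt0.
have r_hi' : r <= (1 + delta) * beta by lra.
have r_lo' : (1 - delta) * beta <= r by lra.
have m1r := upper_window_mean_le r0 r_hi' (ler0n _ m1) m1_hi b01 d0 de d12 eA A2.
have m2r := lower_window_mean_ge r_lo' m2_lo b01 d0 de d12 eA A2.
rewrite -!mulrA -/A.
apply: le_trans (geom_prob_or4 hp
  (fun x => Ygamma_dev_cases x long_fragE m1_gt0 m1n m2n m1p m2p m1r m2r)) _.
have dn0 : 0 < delta * n%:R by rewrite mulr_gt0 // nA divr_gt0 //; lra.
have eA0 : 0 < eps * A / 2 by lra.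
apply: le_trans (leeD (leeD (leeD
  (geom_prob_lengths_dev hp m1n dn0) (geom_prob_lengths_dev hp m2n dn0))
  (geom_prob_long_count_dev hp m1n eA0 j)) (geom_prob_long_count_dev hp m2n eA0 j)) _.
rewrite -!EFinD lee_fin; apply: chebyshev_terms_le => //; lra.
Qed.

Definition natceil {R : realType} (c : R) : nat := `|Num.ceil c|%N.

Section natceil.
Context {R : realType} {c : R}.
Hypothesis c_ge0 : 0 <= c.

Lemma natceil_le k : (natceil c <= k)%N = (c <= k%:R).
Proof.
have ceil_ge0 : (0 <= Num.ceil c)%R by rewrite Num.Theory.ceil_ge0 (lt_le_trans _ c_ge0) ?ltrN10.
by rewrite -lez_nat /natceil gez0_abs // ceil_le_int pmulrn.
Qed.

Lemma natceil_pred_bounds : (natceil c).-1%:R <= c <= (natceil c).-1%:R + 1.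
Proof.
case E : (natceil c) => [|j] /=.
  by have := natceil_le 0; rewrite E leqnn => /esym c_le0; rewrite c_ge0 /=; lra.
have c_le : c <= j.+1%:R by rewrite -natceil_le E.
have : ~~ (c <= j%:R) by rewrite -natceil_le E ltnn.
by rewrite -ltNge natr1 => /ltW ->.
Qed.

End natceil.

Lemma cvg_one_subr_pow {R : realType} (p : nat -> R) (d : nat -> nat) (a : R) :
  (forall n, 0 < p n < 1) -> p @ \oo --> 0 ->
  (fun n => p n * (d n)%:R) @ \oo --> a ->
  (fun n => (1 - p n) ^+ d n) @ \oo --> expR (- a).
Proof.
move=> hp p0 pd.
(* From [1 + x <= e^x] at [x = - p n] and at [x = p n / (1 - p n)]. *)
have pow_bounds n : expR (- (p n * (d n)%:R / (1 - p n))) <= (1 - p n) ^+ d n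
    <= expR (- (p n * (d n)%:R)).
  have /andP[p_gt0 p_lt1] := hp n.
  rewrite mulrAC -!mulNr !expRM_natr; apply/andP; split; apply: lerXn2r;
    rewrite ?nnegrE ?expR_ge0 //; try lra.
    rewrite mulNr expRN -[X in _ <= X]invrK lef_pV2 ?posrE ?expR_gt0 ?invr_gt0 ?subr_gt0 //.
    have := expR_ge1Dx (p n / (1 - p n)).
    by rewrite (_ : 1 + p n / (1 - p n) = (1 - p n)^-1) //; field; lra.
  by have := expR_ge1Dx (- p n); lra.
have lim_lo : (fun n => - (p n * (d n)%:R / (1 - p n))) @ \oo --> - a.
  have -> : a = a / (1 - 0) by rewrite subr0 divr1.
  apply: cvgN; apply: cvgM; first exact: pd.
  by apply: cvgV; [rewrite subr0 oner_neq0 | exact: cvgB (cvg_cst _) p0].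
apply: (squeeze_cvgr (nearW _ pow_bounds)).
- exact: (continuous_cvg _ (@continuous_expR R _) lim_lo).
- exact: (continuous_cvg _ (@continuous_expR R _) (cvgN pd)).
Qed.

Lemma log2_natr_ge0 {R : realType} n : 0 <= log2 (n%:R : R).
Proof.
case: n => [|n]; first by rewrite /log2 ln0 ?mul0r.
by rewrite /log2 divr_ge0 // ln_ge0 // ?ler1n // (ler_nat R 1 2).
Qed.

Lemma cvg_mul_natceil_pred {R : realType} (p c : nat -> R) (a : R) :
  (forall n, 0 < p n) -> (forall n, 0 <= c n) -> p @ \oo --> 0 ->
  (fun n => p n * c n) @ \oo --> a ->
  (fun n => p n * (natceil (c n)).-1%:R) @ \oo --> a.
Proof.
move=> p_gt0 c_ge0 p0 pc.
apply: (squeeze_cvgr (f := fun n => p n * c n - p n) (h := fun n => p n * c n)) => //.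
  apply: nearW => n; have /andP[lo hi] := natceil_pred_bounds (c_ge0 n).
  by have := p_gt0 n => pn0; apply/andP; split; nra.
by rewrite -[a]subr0; apply: cvgB.
Qed.

Lemma ln_natr_cvgy {R : realType} : (fun n : nat => ln (n%:R : R)) @ \oo --> +oo.
Proof.
apply/cvgryPge => M; near=> n.
have n_ge : expR M <= n%:R by near: n; exact: nbhs_infty_ger.
by rewrite -[M]expRK ler_ln ?posrE ?expR_gt0 // (lt_le_trans (expR_gt0 M) n_ge).
Unshelve. all: end_near.
Qed.

Section tearing_asymptotics.
Context {R : realType} {p : nat -> R} {alpha : R}.
Hypothesis hp : forall n, 0 < p n < 1.
Hypothesis halpha : (fun n => p n * log2 (n%:R : R)) @ \oo --> alpha.
Hypothesis alpha_gt0 : 0 < alpha.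

Let ln2_gt0 : 0 < ln (2 : R). Proof. by rewrite ln_gt0 // ltr1n. Qed.

Lemma log2_natr_cvgy : (fun n : nat => log2 (n%:R : R)) @ \oo --> +oo.
Proof.
apply/cvgryPge => M; near=> n; rewrite /log2 ler_pdivlMr //.
by near: n; move/cvgryPge: (@ln_natr_cvgy R); apply.
Unshelve. all: end_near.
Qed.

Lemma tear_prob_cvg0 : p @ \oo --> 0.
Proof.
have inv_log2 : (fun n => (log2 (n%:R : R))^-1) @ \oo --> 0.
  apply/gtr0_cvgV0; last exact: log2_natr_cvgy.
  by move/cvgryPgt: log2_natr_cvgy; apply.
rewrite -(mulr0 alpha); apply: cvg_trans (cvgM halpha inv_log2).
apply: near_eq_cvg; near=> n; rewrite /= mulrK // unitfE gt_eqF //.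
by near: n; move/cvgryPgt: log2_natr_cvgy; apply.
Unshelve. all: end_near.
Qed.

Lemma natr_mul_tear_prob_cvgy : (fun n => n%:R * p n) @ \oo --> +oo.
Proof.
have c_gt0 : 0 < alpha * ln 2 by rewrite mulr_gt0.
apply/cvgryPge => M; near=> n.
have u_ge : alpha / 2 <= p n * log2 (n%:R : R).
  by near: n; apply: (cvgr_ge _ halpha); rewrite ltr_pdivrMr // ltr_pMr // ltr1n.
have L_ge : 4 * `|M| / (alpha * ln 2) + 1 <= ln (n%:R : R).
  by near: n; move/cvgryPge: (@ln_natr_cvgy R); apply.
set L := ln (n%:R : R) in u_ge L_ge *.
have K_ge0 := divr_ge0 (mulr_ge0 (ler0n _ 4) (normr_ge0 M)) (ltW c_gt0).
have L_gt0 : 0 < L by lra.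
have n_ge : L ^+ 2 / 2 <= n%:R.
  have := expR_ge1Dxn 1 (ltW L_gt0); rewrite lnK ?posrE; last first.
    by rewrite ltNge; apply/negP => n_le0; move: L_gt0; rewrite /L ln0 // ltxx.
  by rewrite (_ : (1 + 1)`!%:R = 2 :> R) //; lra.
rewrite /log2 -/L mulrA ler_pdivlMr // in u_ge.
have p_gt0 : 0 < p n by case/andP: (hp n).
have M_le : 4 * `|M| <= L * (alpha * ln 2).
  by rewrite -ler_pdivrMr // -(lerD2r 1) (le_trans L_ge) // lerDl.
have := ler_wpM2r (ltW p_gt0) n_ge; have := ler_wpM2l (ltW L_gt0) u_ge.
have := ler_norm M; nra.
Unshelve. all: end_near.
Qed.

Lemma long_tail_cvg (gamma : R) : 0 < gamma ->
  (fun n => (1 - p n) ^+ (natceil (gamma * log2 (n%:R : R))).-1) @ \oo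
    --> expR (- (alpha * gamma)).
Proof.
move=> gamma_gt0; apply: cvg_one_subr_pow => //; first exact: tear_prob_cvg0.
apply: cvg_mul_natceil_pred => [n|n||]; first by case/andP: (hp n).
- by rewrite mulr_ge0 ?log2_natr_ge0 ?ltW.
- exact: tear_prob_cvg0.
under eq_fun do rewrite mulrCA.
by rewrite mulrC; apply: cvgMr.
Qed.

End tearing_asymptotics.

Theorem lemma4 (R : realType) (p : nat -> R) (alpha gamma eps : R)
  (hp : forall n, 0 < p n < 1)
  (halpha : (fun n => p n * log2 (n%:R : R)) @ \oo --> alpha)
  (halpha0 : 0 < alpha)
  (hgamma : 0 < gamma) (heps : 0 < eps) :
  (fun n => geom_prob (p n) n
     (fun x => eps * n%:R * p n <
               `| (Ygamma gamma x)%:R - expR (- (alpha * gamma)) * n%:R * p n |))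
    @ \oo --> 0%E.
Proof.
set beta := expR (- (alpha * gamma)).
have beta01 : 0 < beta <= 1.
  by rewrite expR_gt0 -expR0 ler_expR oppr_le0 mulr_ge0 // ltW.
set delta := Num.min (eps / 12) (1 / 2).
have delta_gt0 : 0 < delta by rewrite lt_min !divr_gt0.
have delta_le : delta <= eps / 12 /\ delta <= 1 / 2 by rewrite !ge_min !lexx orbT.
have np_oo := natr_mul_tear_prob_cvgy hp halpha halpha0.
have tail_near := cvgr_dist_le _ _ (long_tail_cvg hp halpha gamma hgamma) _
  (mulr_gt0 delta_gt0 (proj1 (andP beta01))).
apply: (squeeze_cvge (f := fun=> 0%E)
  (h := fun n => ((4 / delta ^+ 2 + 16 / eps ^+ 2) / (n%:R * p n))%:E)).
- near=> n; rewrite geom_prob_ge0 //=.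
  apply: (Ygamma_dev_prob_le (j := natceil (gamma * log2 (n%:R : R))) (hp n) heps beta01
    delta_gt0 delta_le.1 delta_le.2).
  + by move=> k; rewrite /long_frag natceil_le // mulr_ge0 ?log2_natr_ge0 ?ltW.
  + by near: n; move/cvgryPge : np_oo; apply.
  + by near: n; move/cvgryPge : np_oo; apply.
  + by near: n; apply: (cvgr_le _ (tear_prob_cvg0 halpha)); rewrite divr_gt0.
  + by rewrite distrC; near: n; exact: tail_near.
- exact: cvg_cst.
- apply: cvg_EFin; first exact: nearW.
  rewrite -(mulr0 (4 / delta ^+ 2 + 16 / eps ^+ 2)); apply: cvgMr.
  by apply/gtr0_cvgV0 => //; move/cvgryPgt : np_oo; apply.
Unshelve. all: end_near.
Qed.
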